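(* Let $R$ be a commutative multiplicative hyperring with identity, let $\alpha$ be a good endomorphism of $R$, and let $I$ be an $\alpha$-prime hyperideal of $R$. If $y\in R$ and $(\alpha(y))^n\subseteq I$ for some $n\in\mathbb N$, then $\alpha^2(y)=\alpha(\alpha(y))\in I$.
   Context: A multiplicative hyperring is an abelian group $(R,+)$ with a hyperoperation $\circ:R\times R\to \mathcal P^*(R)$ (nonempty subsets) such that $a\circ(b\circ c)=(a\circ b)\circ c$, $a\circ(b+c)\subseteq a\circ b+a\circ c$, $(b+c)\circ a\subseteq b\circ a+c\circ a$, and $a\circ(-b)=(-a)\circ b=-(a\circ b)$. Products of subsets are unions of elementwise products, and $x^n=x\circ\cdots\circ x$ ($n$ factors). Commutative means $a\circ b=b\circ a$. An identity $1$ satisfies $a\in1\circ a$ for all $a$. A hyperideal is a nonempty $I\subseteq R$ closed under subtraction with $r\circ x\subseteq I$ for $r\in R$, $x\in I$. Standing assumption: every hyperideal is a $\mathbf C$-hyperideal, i.e. for every finite product $A=r_1\circ\cdots\circ r_n$, $A\cap I\ne\emptyset$ implies $A\subseteq I$. A good endomorphism $\alpha$ satisfies $\alpha(x+y)=\alpha(x)+\alpha(y)$ and $\alpha(x\circ y)=\alpha(x)\circ\alpha(y)$. A hyperideal $I$ is $\alpha$-prime if for all $x,y$, $x\circ y\subseteq I$ implies $x\in I$ or $\alpha(y)\in I$. *)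

From HB Require Import structures.
From mathcomp Require Import all_boot all_algebra.
Set Implicit Arguments. Unset Strict Implicit. Unset Printing Implicit Defensive.
Import GRing.Theory.
Local Open Scope ring_scope.

(* A hyperoperation: a o b is the subset (hop a b) of R. *)
Definition hyperop (R : Type) := R -> R -> (R -> Prop).

Section HyperDefs.
Variables (R : zmodType) (hop : hyperop R).

Definition hsing (a : R) : R -> Prop := fun z => z = a.

Definition hsetmul (A B : R -> Prop) : R -> Prop :=
  fun z => exists a b, A a /\ B b /\ hop a b z.

Definition hsetadd (A B : R -> Prop) : R -> Prop :=
  fun z => exists a b, A a /\ B b /\ z = a + b.

Definition hsetopp (A : R -> Prop) : R -> Prop := fun z => exists a, A a /\ z = - a.

Definition hsubset (A B : R -> Prop) := forall z, A z -> B z.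
Definition hseteq (A B : R -> Prop) := forall z, A z <-> B z.

(* x^n = x o ... o x (n factors), for n >= 1; hpow x 0 is a dummy {x}. *)
Fixpoint hpow (x : R) (n : nat) : R -> Prop :=
  match n with
  | 0 => hsing x
  | 1 => hsing x
  | S m => hsetmul (hpow x m) (hsing x)
  end.

Definition hprod (r1 : R) (rs : seq R) : R -> Prop :=
  foldl (fun A r => hsetmul A (hsing r)) (hsing r1) rs.

Definition is_mult_hyperring : Prop :=
  (forall a b, exists z, hop a b z) /\
  (forall a b c, hseteq (hsetmul (hsing a) (hop b c)) (hsetmul (hop a b) (hsing c))) /\
  (forall a b c, hsubset (hop a (b + c)) (hsetadd (hop a b) (hop a c))) /\
  (forall a b c, hsubset (hop (b + c) a) (hsetadd (hop b a) (hop c a))) /\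
  (forall a b, hseteq (hop a (- b)) (hsetopp (hop a b))) /\
  (forall a b, hseteq (hop (- a) b) (hsetopp (hop a b))).

Definition hcommutative : Prop := forall a b, hseteq (hop a b) (hop b a).

Definition has_identity : Prop := exists e : R, forall a, hop e a a.

Definition is_hyperideal (I : R -> Prop) : Prop :=
  (exists x, I x) /\
  (forall x y, I x -> I y -> I (x - y)) /\
  (forall r x, I x -> hsubset (hop r x) I).

Definition is_C_hyperideal (I : R -> Prop) : Prop :=
  is_hyperideal I /\
  forall (r1 : R) (rs : seq R),
    (exists z, hprod r1 rs z /\ I z) -> hsubset (hprod r1 rs) I.

Definition all_hyperideals_C : Prop :=
  forall I, is_hyperideal I -> is_C_hyperideal I.

Definition good_endo (alpha : R -> R) : Prop :=
  (forall x y, alpha (x + y) = alpha x + alpha y) /\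
  (forall x y, hseteq (fun z => exists w, hop x y w /\ z = alpha w)
                      (hop (alpha x) (alpha y))).

Definition alpha_prime (alpha : R -> R) (I : R -> Prop) : Prop :=
  is_hyperideal I /\
  forall x y, hsubset (hop x y) I -> I x \/ I (alpha y).

End HyperDefs.

(* Write x for alpha y.  If x^(k+2) = x^(k+1) o x lies in I, pick z in x^(k+1):
   then z o x lies in I, so alpha-primeness gives alpha x in I or z in I, and in
   the latter case the C-property spreads z in I to all of x^(k+1); induction
   reduces everything to x in I.  There, e o x lies in I for the identity e, so
   alpha x in I or e in I, and e in I forces alpha x in alpha x o e within I. *)
From mathcomp Require Import all_boot all_algebra.

Set Implicit Arguments.
Unset Strict Implicit.
Unset Printing Implicit Defensive.

Section HyperPowers.
Variables (R : zmodType) (hop : hyperop R).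

Lemma hpow_hprod (x : R) (k : nat) : hpow hop x k.+1 = hprod hop x (nseq k x).
Proof.
elim: k => [//|k IHk].
have -> : nseq k.+1 x = rcons (nseq k x) x by rewrite -cats1 -addn1 nseqD.
by rewrite /hprod foldl_rcons -/(hprod hop x (nseq k x)) -IHk.
Qed.

Lemma hpowSS_mem (x z w : R) (k : nat) :
  hpow hop x k.+1 z -> hop z x w -> hpow hop x k.+2 w.
Proof. by move=> xkz zxw; exists z, x. Qed.

Lemma hpow_nonempty (x : R) (k : nat) :
  (forall a b, exists z, hop a b z) -> exists z, hpow hop x k.+1 z.
Proof.
move=> hop_nonempty; elim: k => [|k [z xkz]]; first by exists x.
have [w zxw] := hop_nonempty z x.
by exists w; apply: hpowSS_mem xkz zxw.
Qed.

Lemma C_hyperideal_hpow (I : R -> Prop) (x z : R) (k : nat) :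
  is_C_hyperideal hop I -> hpow hop x k.+1 z -> I z ->
  hsubset (hpow hop x k.+1) I.
Proof.
move=> [_ C_I] xkz Iz; rewrite hpow_hprod; apply: C_I.
by exists z; rewrite -hpow_hprod.
Qed.

End HyperPowers.

Section AlphaPrime.
Variables (R : zmodType) (hop : hyperop R) (alpha : R -> R) (I : R -> Prop).
Hypotheses (hop_comm : hcommutative hop) (hop_id : has_identity hop).
Hypothesis I_alpha_prime : alpha_prime hop alpha I.

Lemma alpha_prime_alpha_mem (x : R) : I x -> I (alpha x).
Proof.
have [[_ [_ I_absorb]] I_prime] := I_alpha_prime.
have [e e_id] := hop_id => Ix.
have [Ie|//] := I_prime e x (I_absorb e x Ix).
by apply: (I_absorb (alpha x) e Ie); apply/hop_comm.
Qed.

Lemma alpha_prime_hpowSS (x : R) (k : nat) :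
  (forall a b, exists z, hop a b z) -> is_C_hyperideal hop I ->
  hsubset (hpow hop x k.+2) I ->
  hsubset (hpow hop x k.+1) I \/ I (alpha x).
Proof.
move=> hop_nonempty C_I xkI.
have [z xkz] := hpow_nonempty x k hop_nonempty.
have [_ I_prime] := I_alpha_prime.
have [Iz|] := I_prime z x (fun w zxw => xkI w (hpowSS_mem xkz zxw)); last by right.
by left; apply: C_hyperideal_hpow xkz Iz.
Qed.

End AlphaPrime.

Theorem mainTheorem9 (R : zmodType) (hop : hyperop R) (alpha : R -> R)
  (I : R -> Prop) :
  is_mult_hyperring hop -> hcommutative hop -> has_identity hop ->
  all_hyperideals_C hop ->
  good_endo hop alpha -> alpha_prime hop alpha I ->
  forall (y : R) (n : nat), (0 < n)%N ->
    hsubset (hpow hop (alpha y) n) I -> I (alpha (alpha y)).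
Proof.
move=> [hop_nonempty _] hop_comm hop_id all_C _ I_alpha_prime y [//|k] _.
have C_I : is_C_hyperideal hop I by apply/all_C; case: I_alpha_prime.
elim: k => [|k IHk] xkI.
  by apply: (alpha_prime_alpha_mem hop_comm hop_id I_alpha_prime); apply: xkI.
have [|//] := alpha_prime_hpowSS I_alpha_prime hop_nonempty C_I xkI.
exact: IHk.
Qed.
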